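(* Let $g\in\mathcal{G}_0$ and let $(X,\Sigma,\mu)$ be a probability space. Let $\mathcal{P}$ be a finite measurable partition of $X$ containing a set $E$ with $0<\mu(E)<1$, and let $F\in\Sigma$. Then $$H(g,\mathcal{P})\ge H_F(g,\mathcal{P})-|g'_-(1/2)|-d_{\max},$$ where $g'_-(1/2)$ is the left derivative of $g$ at $1/2$ and $d_{\max}=\sup_{x,y\in[0,1]}|g(x)-g(y)|$.
   Context: $\mathcal{G}_0$ is the set of concave functions $g:[0,1]\to\mathbb{R}$ with $g(0)=\lim_{x\to0^+}g(x)=0$. $H(g,\mathcal{P})=\sum_{A\in\mathcal{P}}g(\mu(A))$. The $g$-entropy of $\mathcal{P}$ restricted to $F$ is $H_F(g,\mathcal{P})=\sum_{B\in\mathcal{P}}g(\mu(B\cap F))$. *)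

From Stdlib Require Import Reals Lra List.
Open Scope R_scope.

Record sigma_algebra (X : Type) (S : (X -> Prop) -> Prop) : Prop := {
  sa_full  : S (fun _ => True);
  sa_compl : forall A, S A -> S (fun x => ~ A x);
  sa_union : forall A : nat -> X -> Prop,
      (forall n, S (A n)) -> S (fun x => exists n, A n x)
}.

(* (X, S, mu) is a probability space: mu is a countably additive
   probability measure on the sigma-algebra S (mu's values on
   non-measurable sets are irrelevant). *)
Record probability_space (X : Type) (S : (X -> Prop) -> Prop)
    (mu : (X -> Prop) -> R) : Prop := {
  ps_sigma : sigma_algebra X S;
  ps_nonneg : forall A, S A -> 0 <= mu A;
  ps_empty : mu (fun _ => False) = 0;
  ps_total : mu (fun _ => True) = 1;
  ps_countably_additive : forall A : nat -> X -> Prop,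
      (forall n, S (A n)) ->
      (forall n m x, n <> m -> A n x -> A m x -> False) ->
      Un_cv (fun N => sum_f_R0 (fun n => mu (A n)) N)
            (mu (fun x => exists n, A n x))
}.

Definition finite_measurable_partition (X : Type) (S : (X -> Prop) -> Prop)
    (P : list (X -> Prop)) : Prop :=
  (forall A, In A P -> S A) /\
  (forall i j (d : X -> Prop) x, i <> j -> i < length P -> j < length P ->
       nth i P d x -> nth j P d x -> False)%nat /\
  (forall x, exists A, In A P /\ A x).

Definition concave_on_01 (g : R -> R) : Prop :=
  forall x y t, 0 <= x <= 1 -> 0 <= y <= 1 -> 0 <= t <= 1 ->
    t * g x + (1 - t) * g y <= g (t * x + (1 - t) * y).

Definition in_G0 (g : R -> R) : Prop :=
  concave_on_01 g /\ g 0 = 0 /\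
  (forall eps, 0 < eps -> exists delta, 0 < delta /\
      forall x, 0 < x <= 1 -> x < delta -> Rabs (g x) < eps).

Definition is_left_derivative (g : R -> R) (a L : R) : Prop :=
  forall eps, 0 < eps -> exists delta, 0 < delta /\
    forall h, 0 < h < delta -> Rabs ((g a - g (a - h)) / h - L) < eps.

Definition is_dmax (g : R -> R) (d : R) : Prop :=
  is_lub (fun r => exists x y, 0 <= x <= 1 /\ 0 <= y <= 1 /\
                               r = Rabs (g x - g y)) d.

Definition gH {X : Type} (g : R -> R) (mu : (X -> Prop) -> R)
    (P : list (X -> Prop)) : R :=
  fold_right Rplus 0 (map (fun A => g (mu A)) P).

Definition gH_restr {X : Type} (g : R -> R) (mu : (X -> Prop) -> R)
    (F : X -> Prop) (P : list (X -> Prop)) : R :=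
  fold_right Rplus 0 (map (fun B => g (mu (fun x => B x /\ F x))) P).

(* Write the difference as a sum over the blocks B of P of the terms
   t_B = g(mu B) - g(mu (B /\ F)), where 0 <= mu (B /\ F) <= mu B <= 1.
   - Every term satisfies t_B >= -d_max, by the definition of d_max.
   - If mu B <= 1/2, concavity gives t_B >= g'_-(1/2) (mu B - mu (B /\ F))
     >= -|g'_-(1/2)| mu B: secant slopes of a concave function on [0,1/2]
     dominate its left derivative at 1/2.
   - Since the masses mu B add up to at most 1, at most one block has
     mass above 1/2; so the sum of the t_B is at least
     -|g'_-(1/2)| * sum_B mu B - d_max >= -|g'_-(1/2)| - d_max. *)

From Stdlib Require Import Reals Lra List Lia Classical FunctionalExtensionality PropExtensionality.
Import ListNotations.
Open Scope R_scope.

Lemma pred_ext {X : Type} (A B : X -> Prop) : (forall x, A x <-> B x) -> A = B.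
Proof.
  intros H; apply functional_extensionality; intro x.
  apply propositional_extensionality; auto.
Qed.

Lemma sum_f_R0_nth (l : list R) (N : nat) : (length l <= S N)%nat ->
  sum_f_R0 (fun n => nth n l 0) N = fold_right Rplus 0 l.
Proof.
  revert N; induction l as [|a l IH]; intros N HN.
  - induction N as [|N IHN]; simpl in *; [reflexivity|].
    rewrite IHN by lia; lra.
  - destruct N as [|N].
    + destruct l; simpl in *; [lra|lia].
    + rewrite decomp_sum by lia; simpl.
      rewrite IH by (simpl in HN; lia); reflexivity.
Qed.

Lemma fold_right_Rplus_minus {T : Type} (f h : T -> R) (l : list T) :
  fold_right Rplus 0 (map f l) - fold_right Rplus 0 (map h l) =
  fold_right Rplus 0 (map (fun B => f B - h B) l).
Proof. induction l; simpl; lra. Qed.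

Definition nth_set {X : Type} (l : list (X -> Prop)) (n : nat) : X -> Prop :=
  nth n l (fun _ => False).

Section SigmaAlgebra.
Variables (X : Type) (S : (X -> Prop) -> Prop).
Hypothesis HS : sigma_algebra X S.

Lemma sa_empty : S (fun _ => False).
Proof.
  replace (fun _ : X => False) with (fun _ : X => ~ True).
  - apply (sa_compl _ _ HS), (sa_full _ _ HS).
  - apply pred_ext; tauto.
Qed.

Lemma sa_nth_set (l : list (X -> Prop)) :
  (forall A, In A l -> S A) -> forall n, S (nth_set l n).
Proof.
  intros Hl n; unfold nth_set.
  destruct (Nat.lt_ge_cases n (length l)).
  - apply Hl, nth_In; assumption.
  - rewrite nth_overflow by assumption; apply sa_empty.
Qed.

Lemma sa_union2 (A B : X -> Prop) : S A -> S B -> S (fun x => A x \/ B x).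
Proof.
  intros HA HB.
  replace (fun x => A x \/ B x) with (fun x => exists n, nth_set [A; B] n x).
  - apply (sa_union _ _ HS), sa_nth_set; intros C [<-|[<-|[]]]; assumption.
  - apply pred_ext; intros x; split.
    + intros [[|[|n]] Hn]; unfold nth_set in Hn; simpl in Hn; auto.
      destruct n; contradiction.
    + intros [Hx|Hx]; [exists 0%nat | exists 1%nat]; exact Hx.
Qed.

Lemma sa_inter (A B : X -> Prop) : S A -> S B -> S (fun x => A x /\ B x).
Proof.
  intros HA HB.
  replace (fun x => A x /\ B x) with (fun x => ~ (~ A x \/ ~ B x)).
  - apply (sa_compl _ _ HS), sa_union2; apply (sa_compl _ _ HS); assumption.
  - apply pred_ext; intros x; split; [|tauto].
    intros Hn; split; apply NNPP; tauto.
Qed.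

End SigmaAlgebra.

Section Measure.
Variables (X : Type) (S : (X -> Prop) -> Prop) (mu : (X -> Prop) -> R).
Hypothesis Hmu : probability_space X S mu.

(* Finite additivity, from countable additivity by padding with empty sets. *)
Lemma finite_additivity (l : list (X -> Prop)) :
  (forall A, In A l -> S A) ->
  (forall i j x, i <> j -> (i < length l)%nat -> (j < length l)%nat ->
      nth_set l i x -> nth_set l j x -> False) ->
  fold_right Rplus 0 (map mu l) = mu (fun x => exists n, nth_set l n x).
Proof.
  intros Hl Hdisj.
  assert (Hpartial : forall N, (length l <= N)%nat ->
    sum_f_R0 (fun n => mu (nth_set l n)) N = fold_right Rplus 0 (map mu l)).
  { intros N HN; rewrite <- sum_f_R0_nth with (N := N) by (rewrite length_map; lia).
    apply sum_eq; intros k _; unfold nth_set.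
    rewrite <- (ps_empty _ _ _ Hmu); symmetry; apply map_nth. }
  apply (UL_sequence (fun N => sum_f_R0 (fun n => mu (nth_set l n)) N)).
  - intros eps Heps; exists (length l); intros n Hn.
    rewrite Hpartial by lia; unfold Rdist, R_dist.
    rewrite Rminus_diag, Rabs_R0; lra.
  - apply (ps_countably_additive _ _ _ Hmu).
    + apply sa_nth_set; [apply (ps_sigma _ _ _ Hmu) | assumption].
    + intros n m x Hnm Hn Hm; unfold nth_set in Hn, Hm.
      destruct (Nat.lt_ge_cases n (length l));
        [|rewrite nth_overflow in Hn by assumption; contradiction].
      destruct (Nat.lt_ge_cases m (length l));
        [|rewrite nth_overflow in Hm by assumption; contradiction].
      eapply Hdisj; eauto.
Qed.

(* Monotonicity: B is the disjoint union of A and B \ A. *)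
Lemma measure_mono (A B : X -> Prop) : S A -> S B ->
  (forall x, A x -> B x) -> mu A <= mu B.
Proof.
  intros HA HB Hsub; pose proof (ps_sigma _ _ _ Hmu) as HS.
  assert (HBA : S (fun x => B x /\ ~ A x)) by (apply sa_inter, sa_compl; auto).
  assert (Hsplit : mu A + mu (fun x => B x /\ ~ A x) = mu B).
  { replace (mu A + mu (fun x => B x /\ ~ A x))
      with (fold_right Rplus 0 (map mu [A; fun x => B x /\ ~ A x])) by (simpl; ring).
    rewrite finite_additivity.
    - f_equal; apply pred_ext; intros x; split.
      + intros [[|[|n]] Hn]; unfold nth_set in Hn; simpl in Hn;
        [auto | tauto | destruct n; contradiction].
      + intros Hx; destruct (classic (A x)); [exists 0%nat | exists 1%nat];
        unfold nth_set; simpl; auto.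
    - intros C [<-|[<-|[]]]; assumption.
    - intros [|[|i]] [|[|j]] x Hij Hi Hj; simpl in *; try lia; unfold nth_set; simpl; tauto. }
  pose proof (ps_nonneg _ _ _ Hmu _ HBA); lra.
Qed.

Lemma partition_mass_le_1 (P : list (X -> Prop)) :
  finite_measurable_partition X S P -> fold_right Rplus 0 (map mu P) <= 1.
Proof.
  intros [Hmeas [Hdisj _]]; pose proof (ps_sigma _ _ _ Hmu) as HS.
  rewrite finite_additivity, <- (ps_total _ _ _ Hmu) by (auto; intros; eapply Hdisj; eauto).
  apply measure_mono; auto.
  - apply (sa_union _ _ HS), sa_nth_set; auto.
  - apply (sa_full _ _ HS).
Qed.

Lemma trace_mass_bounds (A F : X -> Prop) : S A -> S F ->
  0 <= mu (fun x => A x /\ F x) <= mu A /\ mu A <= 1.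
Proof.
  intros HA HF; pose proof (ps_sigma _ _ _ Hmu) as HS.
  assert (HAF : S (fun x => A x /\ F x)) by (apply sa_inter; assumption).
  rewrite <- (ps_total _ _ _ Hmu); repeat split.
  - apply (ps_nonneg _ _ _ Hmu); assumption.
  - apply measure_mono; [assumption | assumption | tauto].
  - apply measure_mono; [assumption | apply (sa_full _ _ HS) | tauto].
Qed.

End Measure.

Lemma dmax_bounds (g : R -> R) (d : R) : is_dmax g d ->
  0 <= d /\ forall x y, 0 <= x <= 1 -> 0 <= y <= 1 -> - d <= g x - g y.
Proof.
  intros [Hub _].
  assert (Hosc : forall x y, 0 <= x <= 1 -> 0 <= y <= 1 -> Rabs (g x - g y) <= d)
    by (intros x y Hx Hy; apply Hub; exists x, y; auto).
  split.
  - specialize (Hosc 0 0 ltac:(lra) ltac:(lra)); pose proof (Rabs_pos (g 0 - g 0)); lra.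
  - intros x y Hx Hy; specialize (Hosc x y Hx Hy).
    pose proof (Rle_abs (- (g x - g y))) as Hneg; rewrite Rabs_Ropp in Hneg; lra.
Qed.

Definition slope (g : R -> R) (u v : R) : R := (g v - g u) / (v - u).

Lemma Rdiv_le_cross (u v p q : R) : 0 < p -> 0 < q -> u * q <= v * p -> u / p <= v / q.
Proof.
  intros Hp Hq H.
  replace (u / p) with (u * q * / (p * q)) by (field; lra).
  replace (v / q) with (v * p * / (p * q)) by (field; lra).
  apply Rmult_le_compat_r; [left; apply Rinv_0_lt_compat, Rmult_lt_0_compat|]; assumption.
Qed.

Section ConcaveSlopes.
Variable g : R -> R.
Hypothesis Hconc : concave_on_01 g.

Lemma concave_chord (a b c : R) : 0 <= a -> a < b -> b < c -> c <= 1 ->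
  (c - b) * g a + (b - a) * g c <= (c - a) * g b.
Proof.
  intros Ha Hab Hbc Hc.
  set (t := (c - b) / (c - a)).
  assert (Ht : 0 <= t <= 1).
  { assert (t * (c - a) = c - b) by (unfold t; field; lra); split; nra. }
  pose proof (Hconc a c t ltac:(lra) ltac:(lra) Ht) as H.
  replace (t * a + (1 - t) * c) with b in H by (unfold t; field; lra).
  replace (c - b) with ((c - a) * t) by (unfold t; field; lra).
  replace (b - a) with ((c - a) * (1 - t)) by (unfold t; field; lra).
  replace ((c - a) * t * g a + (c - a) * (1 - t) * g c)
    with ((c - a) * (t * g a + (1 - t) * g c)) by ring.
  apply Rmult_le_compat_l; lra.
Qed.

Lemma slope_right_decr (a b c : R) : 0 <= a -> a < b -> b < c -> c <= 1 ->
  slope g a c <= slope g a b.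
Proof.
  intros Ha Hab Hbc Hc; pose proof (concave_chord a b c Ha Hab Hbc Hc).
  unfold slope; apply Rdiv_le_cross; nra.
Qed.

Lemma slope_left_decr (a b c : R) : 0 <= a -> a < b -> b < c -> c <= 1 ->
  slope g b c <= slope g a c.
Proof.
  intros Ha Hab Hbc Hc; pose proof (concave_chord a b c Ha Hab Hbc Hc).
  unfold slope; apply Rdiv_le_cross; nra.
Qed.

(* The left derivative at c is a lower bound for every secant slope
   between points y < x <= c: the left difference quotients at c are
   such secants and are all bounded by slope g y x. *)
Lemma left_derivative_le_slope (c L y x : R) :
  is_left_derivative g c L -> 0 <= y -> y < x -> x <= c -> c <= 1 ->
  L <= slope g y x.
Proof.
  intros HL Hy Hyx Hxc Hc.
  assert (Hquot : forall h, 0 < h < c - y -> (g c - g (c - h)) / h <= slope g y x).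
  { intros h Hh.
    replace ((g c - g (c - h)) / h) with (slope g (c - h) c)
      by (unfold slope; f_equal; ring).
    apply Rle_trans with (slope g y c); [apply slope_left_decr; lra|].
    destruct (Rle_lt_or_eq_dec x c Hxc) as [Hlt|<-]; [|lra].
    apply slope_right_decr; lra. }
  apply Rnot_lt_le; intro Hgt.
  destruct (HL (L - slope g y x) ltac:(lra)) as [delta [Hdelta Hclose]].
  set (h := Rmin (delta / 2) ((c - y) / 2)).
  assert (Hh : 0 < h < delta /\ h < c - y).
  { pose proof (Rmin_l (delta / 2) ((c - y) / 2)) as Hl.
    pose proof (Rmin_r (delta / 2) ((c - y) / 2)) as Hr.
    fold h in Hl, Hr.
    assert (0 < h) by (apply Rmin_glb_lt; lra). lra. }
  specialize (Hclose h ltac:(lra)); specialize (Hquot h ltac:(lra)).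
  apply Rabs_def2 in Hclose; lra.
Qed.

Lemma increment_ge_left_derivative (c L y x : R) :
  is_left_derivative g c L -> 0 <= y -> y <= x -> x <= c -> c <= 1 ->
  L * (x - y) <= g x - g y.
Proof.
  intros HL Hy Hyx Hxc Hc.
  destruct (Rle_lt_or_eq_dec y x Hyx) as [Hlt|<-]; [|lra].
  pose proof (left_derivative_le_slope c L y x HL Hy Hlt Hxc Hc) as Hs.
  apply Rmult_le_compat_r with (r := x - y) in Hs; [|lra].
  unfold slope in Hs; replace ((g x - g y) / (x - y) * (x - y)) with (g x - g y) in Hs
    by (field; lra); exact Hs.
Qed.

End ConcaveSlopes.

(* Summation lemma: if the weights a are nonnegative with total at most 1,
   every term t is >= -d, and terms of weight at most 1/2 are >= -K a,
   then the sum of the terms is >= -K (sum of weights) - d, since at most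
   one weight exceeds 1/2; when the total weight is at most 1/2 the
   penalty d is not even needed, which makes the induction go through. *)
Lemma sum_ge_one_heavy_term {T : Type} (l : list T) (a t : T -> R) (K d : R) :
  0 <= K -> 0 <= d ->
  (forall B, In B l -> 0 <= a B) ->
  (forall B, In B l -> - d <= t B) ->
  (forall B, In B l -> a B <= 1/2 -> - K * a B <= t B) ->
  fold_right Rplus 0 (map a l) <= 1 ->
  - K * fold_right Rplus 0 (map a l) - d <= fold_right Rplus 0 (map t l) /\
  (fold_right Rplus 0 (map a l) <= 1/2 ->
   - K * fold_right Rplus 0 (map a l) <= fold_right Rplus 0 (map t l)).
Proof.
  intros HK Hd; induction l as [|B l IH]; intros Ha Ht Hlight Hsum; simpl in *.
  - split; intros; lra.
  - assert (Hrest : 0 <= fold_right Rplus 0 (map a l)).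
    { clear -Ha; induction l as [|C l IHl]; simpl in *; [lra|].
      pose proof (Ha C (or_intror (or_introl eq_refl))).
      enough (0 <= fold_right Rplus 0 (map a l)) by lra.
      apply IHl; intros D [<-|HD]; auto. }
    assert (HaB : 0 <= a B) by auto.
    assert (HtB : - d <= t B) by auto.
    destruct IH as [IHall IHlight]; auto; try lra.
    destruct (Rle_lt_dec (a B) (1/2)) as [Hle|Hgt].
    + assert (- K * a B <= t B) by auto.
      split; [nra|]. intros; specialize (IHlight ltac:(lra)); nra.
    + specialize (IHlight ltac:(lra)); split; [nra | intros; lra].
Qed.

Theorem mainTheorem18 (g : R -> R) (X : Type) (S : (X -> Prop) -> Prop)
    (mu : (X -> Prop) -> R) (P : list (X -> Prop)) (E F : X -> Prop)
    (gL d : R) :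
  in_G0 g ->
  probability_space X S mu ->
  finite_measurable_partition X S P ->
  In E P -> 0 < mu E < 1 ->
  S F ->
  is_left_derivative g (1/2) gL ->
  is_dmax g d ->
  gH g mu P >= gH_restr g mu F P - Rabs gL - d.
Proof.
  intros [Hconc _] Hmu HP _ _ HF HL Hdmax.
  destruct (dmax_bounds g d Hdmax) as [Hd Hosc].
  pose proof (partition_mass_le_1 X S mu Hmu P HP) as Htotal.
  assert (Hmass : forall B, In B P ->
     0 <= mu (fun x => B x /\ F x) <= mu B /\ mu B <= 1)
    by (intros B HB; apply (trace_mass_bounds X S mu Hmu); [apply HP |]; assumption).
  destruct (sum_ge_one_heavy_term P mu (fun B => g (mu B) - g (mu (fun x => B x /\ F x)))
              (Rabs gL) d (Rabs_pos gL) Hd) as [Hsum _]; try assumption.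
  - intros B HB; specialize (Hmass B HB); lra.
  - intros B HB; specialize (Hmass B HB); apply Hosc; lra.
  - intros B HB Hhalf; specialize (Hmass B HB).
    pose proof (increment_ge_left_derivative g Hconc (1/2) gL
                  (mu (fun x => B x /\ F x)) (mu B) HL ltac:(lra) ltac:(lra) Hhalf ltac:(lra)).
    pose proof (Rabs_pos gL); pose proof (Rle_abs (- gL)); rewrite Rabs_Ropp in *; nra.
  - unfold gH, gH_restr; rewrite <- fold_right_Rplus_minus in Hsum.
    pose proof (Rabs_pos gL); nra.
Qed.
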